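(* Let $D\in\mathbb{R}^{d\times d}$ be symmetric positive definite and $C\in\mathbb{R}^{d\times d}$ positively stable, and let $K$ be the symmetric positive definite solution of $2D=CK+KC^T$. Let $\lambda_K$ be the smallest eigenvalue of $\sqrt D K^{-1}\sqrt D$ and $\mu:=\min\{\operatorname{Re}\lambda:\lambda\in\sigma(C)\}$. Then: (i) $\lambda_K\le\mu$; (ii) if $C$ is diagonalizable, so that $\tilde C:=\sqrt D^{-1}C\sqrt D=\tilde A\Lambda\tilde A^{-1}$ with $\Lambda$ diagonal and $\tilde A$ invertible, then $\mu\le\kappa(\tilde A)^2\lambda_K$, where $\kappa(\tilde A):=\|\tilde A\|_2\|\tilde A^{-1}\|_2$.
   Context: Positively stable: all eigenvalues have strictly positive real part. $\sqrt D$ is the symmetric positive definite square root; $\|\cdot\|_2$ is the spectral norm. *)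

From HB Require Import structures.
From mathcomp Require Import all_boot all_order all_algebra.
From mathcomp Require Import complex.
From mathcomp Require Import boolp classical_sets reals.

Set Implicit Arguments.
Unset Strict Implicit.
Unset Printing Implicit Defensive.

Import Order.TTheory GRing.Theory Num.Theory.
Local Open Scope ring_scope.
Local Open Scope classical_set_scope.

Section Defs.
Variable R : realType.

Definition symmx d (A : 'M[R]_d) : Prop := A^T = A.

Definition posdefmx d (A : 'M[R]_d) : Prop :=
  forall x : 'cV[R]_d, x != 0 -> 0 < (x^T *m A *m x) 0 0.

Definition spdmx d (A : 'M[R]_d) : Prop := symmx A /\ posdefmx A.

Definition is_sqrtmx d (D S : 'M[R]_d) : Prop := spdmx S /\ S *m S = D.

Definition cplxmx m n (A : 'M[R]_(m, n)) : 'M[R[i]]_(m, n) :=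
  map_mx (fun x : R => (x%:C)%C) A.

Definition spectrum d (C : 'M[R]_d) : set R[i] :=
  [set l | eigenvalue (cplxmx C) l].

Definition pos_stable d (C : 'M[R]_d) : Prop :=
  forall l, l \in spectrum C -> 0 < complex.Re l.

Definition is_min_re_spec d (C : 'M[R]_d) (m : R) : Prop :=
  (exists2 l : R[i], l \in spectrum C & complex.Re l = m) /\
  (forall l, l \in spectrum C -> m <= complex.Re l).

Definition is_min_eig d (M : 'M[R]_d) (l : R) : Prop :=
  eigenvalue M l /\ (forall l', eigenvalue M l' -> l <= l').

Definition cvnorm d (x : 'cV[R[i]]_d) : R :=
  Num.sqrt (\sum_(k < d) (ComplexField.Normc.normc (x k 0)) ^+ 2).

Definition spnorm d (A : 'M[R[i]]_d) : R :=
  sup [set cvnorm (A *m x) | x in [set x : 'cV[R[i]]_d | cvnorm x = 1]].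

Definition condnum d (A : 'M[R[i]]_d) : R := spnorm A * spnorm (invmx A).

End Defs.

(* Conjugating by sqrt D, put T := sqrt D^-1 C sqrt D and N := sqrt D^-1 K sqrt D^-1.
   The Lyapunov equation becomes T N + N T^* = 2, and N is the inverse of
   sqrt D K^-1 sqrt D, so N <= 1/lambda_K with equality at an eigenvector.
   (i) If u T = l u with Re l = mu, evaluating the equation at u^* gives
   |u|^2 = mu u N u^* <= mu/lambda_K |u|^2.
   (ii) If T = A Lam A^-1, then B := A^-1 N A^-* solves Lam B + B Lam^* = 2 A^-1 A^-*;
   evaluated at an eigenvector of B this gives B <= |A^-1|^2/mu, hence
   1/lambda_K <= |A|^2 |A^-1|^2/mu since N = A B A^*. *)
Set Warnings "-notation-overridden -ambiguous-paths".
From HB Require Import structures.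
From mathcomp Require Import all_boot all_order all_algebra.
From mathcomp Require Import complex.
From mathcomp Require Import boolp classical_sets reals.
From mathcomp Require Import ring.
Import Order.TTheory GRing.Theory Num.Theory.
Set Implicit Arguments.
Unset Strict Implicit.
Local Open Scope ring_scope.
Local Open Scope sesquilinear_scope.

Section HermitianForm.
Variable C : numClosedFieldType.

Lemma adjmxM m n p (X : 'M[C]_(m, n)) (Y : 'M[C]_(n, p)) :
  (X *m Y)^t* = Y^t* *m X^t*.
Proof. by rewrite trmx_mul map_mxM. Qed.

Lemma adjmx_eq0 m n (x : 'M[C]_(m, n)) : (x^t* == 0) = (x == 0).
Proof. by rewrite map_mx_eq0 trmx_eq0. Qed.

Definition sqnorm n (x : 'cV[C]_n) : C := (x^t* *m x) 0 0.
Definition hform n (H : 'M[C]_n) (x : 'cV[C]_n) : C := (x^t* *m H *m x) 0 0.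

Lemma sqnorm_dotmx n (x : 'cV[C]_n) : sqnorm x = dotmx (x^t*) (x^t*).
Proof. by rewrite dotmxE trmxCK. Qed.

Lemma sqnorm_ge0 n (x : 'cV[C]_n) : 0 <= sqnorm x.
Proof. by rewrite sqnorm_dotmx dnorm_ge0. Qed.

Lemma sqnorm_eq0 n (x : 'cV[C]_n) : (sqnorm x == 0) = (x == 0).
Proof. by rewrite sqnorm_dotmx dnorm_eq0 adjmx_eq0. Qed.

Lemma sqnorm_gt0 n (x : 'cV[C]_n) : (0 < sqnorm x) = (x != 0).
Proof. by rewrite sqnorm_dotmx dnorm_gt0 adjmx_eq0. Qed.

Lemma sqnorm_sum n (x : 'cV[C]_n) : sqnorm x = \sum_k `|x k 0| ^+ 2.
Proof. by rewrite /sqnorm mxE; apply: eq_bigr => k _; rewrite !mxE normCK mulrC. Qed.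

Lemma hform1 n (x : 'cV[C]_n) : hform 1%:M x = sqnorm x.
Proof. by rewrite /hform mulmx1. Qed.

Lemma hformD n (A B : 'M[C]_n) x : hform (A + B) x = hform A x + hform B x.
Proof. by rewrite /hform mulmxDr mulmxDl mxE. Qed.

Lemma hformZ n (a : C) (A : 'M[C]_n) x : hform (a *: A) x = a * hform A x.
Proof. by rewrite /hform -scalemxAr -scalemxAl mxE. Qed.

Lemma hform_scalar n (a : C) (x : 'cV[C]_n) : hform a%:M x = a * sqnorm x.
Proof. by rewrite -scalemx1 hformZ hform1. Qed.

Lemma hform_conj n (P X : 'M[C]_n) (y : 'cV[C]_n) :
  hform (P *m X *m P^t*) y = hform X (P^t* *m y).
Proof. by rewrite /hform adjmxM trmxCK !mulmxA. Qed.

Lemma hform_diag n (s : 'rV[C]_n) (w : 'cV[C]_n) :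
  hform (diag_mx s) w = \sum_k s 0 k * `|w k 0| ^+ 2.
Proof.
rewrite /hform mxE; apply: eq_bigr => k _.
by rewrite mul_mx_diag !mxE normCK; ring.
Qed.

Lemma hform_mulmx_eigen n (A B : 'M[C]_n) (z : 'cV[C]_n) e :
  A *m z = e *: z -> hform (B *m A) z = e * hform B z.
Proof. by move=> hz; rewrite /hform !mulmxA -(mulmxA _ A) hz -scalemxAr mxE. Qed.

Lemma hform_eigen n (H : 'M[C]_n) (z : 'cV[C]_n) e :
  H *m z = e *: z -> hform H z = e * sqnorm z.
Proof. by move=> hz; rewrite -[H]mul1mx (hform_mulmx_eigen _ hz) hform1. Qed.

Lemma hform_mulmx_adj_eigen n (A B : 'M[C]_n) (z : 'cV[C]_n) e :
  A^t* *m z = e *: z -> hform (A *m B) z = e^* * hform B z.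
Proof.
move=> hz; have hzt : z^t* *m A = e^* *: z^t*.
  have := congr1 (fun M => M^t*) hz.
  by rewrite /= adjmxM trmxCK linearZ /= map_mxZ.
by rewrite /hform mulmxA hzt -!scalemxAl mxE.
Qed.

Lemma hermitian_eigen_real n (H : 'M[C]_n) (z : 'cV[C]_n) e : H^t* = H ->
  z != 0 -> H *m z = e *: z -> e^* = e.
Proof.
move=> hH z0 hz.
have h : hform (H *m 1%:M) z = e^* * hform 1%:M z.
  by apply: hform_mulmx_adj_eigen; rewrite hH.
rewrite mulmx1 hform1 (hform_eigen hz) in h.
by apply: (mulIf (lt0r_neq0 _ : sqnorm z != 0)); rewrite ?sqnorm_gt0.
Qed.

Lemma sqnorm_unitary n (P : 'M[C]_n) (y : 'cV[C]_n) :
  P \is unitarymx -> sqnorm (P *m y) = sqnorm y.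
Proof.
move=> Pu; have PtP : P^t* *m P = 1%:M by rewrite -[P^t*]mul1mx mulmxKtV.
by rewrite /sqnorm adjmxM -mulmxA (mulmxA _ P) PtP mul1mx.
Qed.

Lemma hermitian_spectral n (H : 'M[C]_n) : H^t* = H ->
  exists2 P : 'M[C]_n, P \is unitarymx &
  exists2 s : 'rV[C]_n,
    (forall k, exists2 z : 'cV[C]_n, z != 0 & H *m z = s 0 k *: z)
    & forall y, hform H y = hform (diag_mx s) (P *m y).
Proof.
move=> hH.
have /hermitian_normalmx/orthomx_spectralP : H \is hermsymmx.
  by apply/is_hermitianmxP; rewrite expr0 scale1r hH.
set P := spectralmx H; set s := spectral_diag H => HE.
have Pu : P \is unitarymx by apply: spectral_unitarymx.
rewrite invmx_unitary // in HE.
exists P => //; exists s => [k|y]; last by rewrite HE -[P in _ *m P]trmxCK hform_conj trmxCK.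
have PPt : P *m P^t* = 1%:M by apply/unitarymxP.
exists (P^t* *m delta_mx k 0).
  apply: contraTneq isT => z0; have := congr1 (fun z => (P *m z) k 0) z0.
  by rewrite /= mulmxA PPt mul1mx mulmx0 !mxE !eqxx => /eqP; rewrite oner_eq0.
rewrite HE -!mulmxA (mulmxA P) PPt mul1mx scalemxAr; congr (_ *m _).
apply/matrixP => i j; rewrite mul_diag_mx !mxE.
by have [->|ik] := eqVneq i k; rewrite ?(negbTE ik) ?mulr0n ?mulr0.
Qed.

Lemma hermitian_form_le n (H : 'M[C]_n) t : H^t* = H ->
  (forall (z : 'cV[C]_n) e, z != 0 -> H *m z = e *: z -> e <= t) ->
  forall y, hform H y <= t * sqnorm y.
Proof.
move=> hH ht y; have [P Pu [s hs ->]] := hermitian_spectral hH.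
rewrite -(sqnorm_unitary y Pu) hform_diag sqnorm_sum mulr_sumr.
apply: ler_sum => k _; have [z z0 hz] := hs k.
by apply: ler_wpM2r; [apply: exprn_ge0|apply: ht hz].
Qed.

Lemma lyapunov_adj_eigen n (T N : 'M[C]_n) (a l : C) (y : 'cV[C]_n) :
  T *m N + N *m T^t* = a%:M -> T^t* *m y = l *: y ->
  a * sqnorm y = (l + l^*) * hform N y.
Proof.
move=> hL hy; rewrite -hform_scalar -hL hformD.
rewrite (hform_mulmx_adj_eigen _ hy) (hform_mulmx_eigen _ hy); ring.
Qed.

Lemma lyapunov_hermitian_eigen n (L B : 'M[C]_n) (e : C) (z : 'cV[C]_n) :
  B^t* = B -> z != 0 -> B *m z = e *: z ->
  hform (L *m B + B *m L^t*) z = e * hform (L + L^t*) z.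
Proof.
move=> hB z0 hz; have eR := hermitian_eigen_real hB z0 hz.
have hz' : B^t* *m z = e *: z by rewrite hB.
by rewrite !hformD (hform_mulmx_eigen _ hz) (hform_mulmx_adj_eigen _ hz') eR mulrDr.
Qed.

Lemma hform_diag_adj_ge n (s : 'rV[C]_n) (t : C) (z : 'cV[C]_n) :
  (forall k, t <= s 0 k + (s 0 k)^*) ->
  t * sqnorm z <= hform (diag_mx s + (diag_mx s)^t*) z.
Proof.
move=> hs; rewrite hformD tr_diag_mx map_diag_mx !hform_diag -big_split /=.
rewrite sqnorm_sum mulr_sumr; apply: ler_sum => k _.
by rewrite !mxE -mulrDl; apply: ler_wpM2r; [apply: exprn_ge0|apply: hs].
Qed.

Lemma lyapunov_diag_form_le n (s : 'rV[C]_n) (B Q : 'M[C]_n) (m c : C) :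
  B^t* = B -> 0 < m -> (forall k, m *+ 2 <= s 0 k + (s 0 k)^*) ->
  (forall z, sqnorm (Q^t* *m z) <= c * sqnorm z) ->
  diag_mx s *m B + B *m (diag_mx s)^t* = 2%:R *: (Q *m Q^t*) ->
  forall w, hform B w <= c / m * sqnorm w.
Proof.
move=> hB m0 hs hQ hL; apply: hermitian_form_le => // z e z0 hz.
have zp : 0 < sqnorm z by rewrite sqnorm_gt0.
have c0 : 0 <= c by rewrite -(pmulr_lge0 _ zp); apply: le_trans (hQ z); apply: sqnorm_ge0.
set W := hform (diag_mx s + (diag_mx s)^t*) z.
have eW : e * W = 2%:R * sqnorm (Q^t* *m z).
  by rewrite /W -(lyapunov_hermitian_eigen _ hB z0 hz) hL hformZ -{1}(mulmx1 Q) hform_conj hform1.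
have Wge : m *+ 2 * sqnorm z <= W by apply: hform_diag_adj_ge.
have Wp : 0 < W by apply: lt_le_trans Wge; rewrite pmulr_rgt0 // mulrn_wgt0.
rewrite -(ler_pM2r Wp) eW; apply: le_trans (_ : 2%:R * (c * sqnorm z) <= _).
  by rewrite ler_pM2l ?ltr0n.
have -> : 2%:R * (c * sqnorm z) = c / m * (m *+ 2 * sqnorm z).
  by field; rewrite gt_eqF.
by apply: ler_wpM2l => //; rewrite divr_ge0 // ltW.
Qed.

Lemma sqnorm_mulmx_le_frobenius n (B : 'M[C]_n) (x : 'cV[C]_n) :
  sqnorm (B *m x) <= (\sum_i \sum_j `|B i j| ^+ 2) * sqnorm x.
Proof.
rewrite [sqnorm (B *m x)]sqnorm_sum mulr_suml; apply: ler_sum => i _.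
have rowE : (row i B *m (row i B)^t*) 0 0 = \sum_j `|B i j| ^+ 2.
  by rewrite mxE; apply: eq_bigr => j _; rewrite !mxE normCK.
have := (CauchySchwarz (@dotmx C n) (row i B) (x^t*)).1.
by rewrite /= !dotmxE trmxCK rowE -row_mul [row _ _ 0 0]mxE.
Qed.

Lemma sqnorm_adjmx_le n (B : 'M[C]_n) (c : C) :
  (forall x, sqnorm (B *m x) <= c * sqnorm x) ->
  forall x, sqnorm (B^t* *m x) <= c * sqnorm x.
Proof.
move=> hB x; set y := B^t* *m x.
have yE : sqnorm y = dotmx (x^t*) ((B *m y)^t*).
  by rewrite dotmxE trmxCK /sqnorm /y adjmxM trmxCK !mulmxA.
have cs : sqnorm y ^+ 2 <= sqnorm x * sqnorm (B *m y).
  rewrite -[sqnorm y]ger0_norm ?sqnorm_ge0 // {1}yE !sqnorm_dotmx.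
  exact: (CauchySchwarz (@dotmx C n) _ _).1.
have [y0|yp] := eqVneq (sqnorm y) 0.
  by rewrite y0 (le_trans (sqnorm_ge0 (B *m x)) (hB x)).
have {}yp : 0 < sqnorm y by rewrite lt_def yp sqnorm_ge0.
rewrite -(ler_pM2r yp) mulrAC -expr2; apply: le_trans cs _.
by rewrite mulrC; apply: ler_wpM2r; [apply: sqnorm_ge0|apply: hB].
Qed.

Lemma lyapunov_conj n (T N L P : 'M[C]_n) (a : C) :
  T *m N + N *m T^t* = a%:M -> P *m T = L *m P ->
  L *m (P *m N *m P^t*) + (P *m N *m P^t*) *m L^t* = a *: (P *m P^t*).
Proof.
move=> hL hP.
have hPt : P^t* *m L^t* = T^t* *m P^t* by rewrite -!adjmxM hP.
have -> : L *m (P *m N *m P^t*) = P *m (T *m N) *m P^t* by rewrite !mulmxA hP.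
have -> : P *m N *m P^t* *m L^t* = P *m (N *m T^t*) *m P^t*.
  by rewrite -mulmxA hPt !mulmxA.
by rewrite -mulmxDl -mulmxDr hL mul_mx_scalar -scalemxAl.
Qed.

Lemma mulKmx_similar n (A X : 'M[C]_n) : A \in unitmx ->
  invmx A *m (A *m X *m invmx A) = X *m invmx A.
Proof. by move=> Au; rewrite -mulmxA mulKmx. Qed.

Lemma conj_invmx_adj n (X A : 'M[C]_n) : A \in unitmx ->
  A *m (invmx A *m X *m (invmx A)^t*) *m A^t* = X.
Proof.
move=> Au; rewrite !mulmxA mulmxV // mul1mx -mulmxA -adjmxM mulmxV //.
by rewrite trmx1 map_mx1 mulmx1.
Qed.

Lemma hform_conj_le n (A B : 'M[C]_n) (b a : C) (y : 'cV[C]_n) :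
  (forall w, hform B w <= b * sqnorm w) ->
  (forall z, sqnorm (A^t* *m z) <= a * sqnorm z) -> 0 <= b ->
  hform (A *m B *m A^t*) y <= b * a * sqnorm y.
Proof.
move=> hB hA b0; rewrite hform_conj -mulrA.
by apply: le_trans (hB _) _; apply: ler_wpM2l.
Qed.
End HermitianForm.

Lemma eigenvector_inv (F : fieldType) n (M N : 'M[F]_n) (z : 'cV[F]_n) e :
  M *m N = 1%:M -> z != 0 -> N *m z = e *: z -> e != 0 /\ M *m z = e^-1 *: z.
Proof.
move=> MN z0 hz.
have Mz : e *: (M *m z) = z by rewrite scalemxAr -hz mulmxA MN mul1mx.
have e0 : e != 0 by apply: contraNneq z0 => e0; rewrite -Mz e0 scale0r.
by split=> //; rewrite -[in RHS]Mz scalerA mulVf // scale1r.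
Qed.

Lemma eigenvalue_sym (F : fieldType) n (A : 'M[F]_n) (z : 'cV[F]_n) a :
  A^T = A -> z != 0 -> A *m z = a *: z -> eigenvalue A a.
Proof.
move=> hA z0 hz; apply/eigenvalueP; exists z^T; last by rewrite trmx_eq0.
by rewrite -{1}hA -trmx_mul hz linearZ.
Qed.

Lemma eigenvalue_similar (F : fieldType) n (P A : 'M[F]_n) a : P \in unitmx ->
  eigenvalue (invmx P *m A *m P) a = eigenvalue A a.
Proof.
suff conj_eig (Q B : 'M[F]_n) : Q \in unitmx -> eigenvalue B a ->
    eigenvalue (invmx Q *m B *m Q) a.
  move=> Pu; apply/idP/idP; last exact: conj_eig.
  move/(conj_eig (invmx P)); rewrite unitmx_inv invmxK => /(_ Pu).
  by rewrite !mulmxA mulmxV // mul1mx mulmxK.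
move=> Qu /eigenvalueP [v hv v0]; apply/eigenvalueP; exists (v *m Q).
  by rewrite !mulmxA mulmxK // hv scalemxAl.
by apply: contraNneq v0 => vQ0; rewrite -(mulmxK Qu v) vQ0 mul0mx.
Qed.

Lemma eigenvalue_diag_similar (F : fieldType) n (A T : 'M[F]_n) (s : 'rV[F]_n) k :
  A \in unitmx -> T = A *m diag_mx s *m invmx A -> eigenvalue T (s 0 k).
Proof.
move=> Au ->; rewrite -{1}(invmxK A) eigenvalue_similar ?unitmx_inv //.
apply/eigenvalueP; exists (delta_mx 0 k : 'rV_n).
  apply/rowP => j; rewrite mul_mx_diag !mxE.
  by have [->|jk] := eqVneq j k; rewrite eqxx ?(negbTE jk) ?mul0r ?mulr0 // mulrC.
by apply/eqP => /rowP /(_ k); rewrite !mxE !eqxx => /eqP; rewrite oner_eq0.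
Qed.

Section SpectralNorm.
Variable R : realType.
Local Notation C := R[i].
Local Notation normc := ComplexField.Normc.normc.
Local Open Scope complex_scope.

Lemma normc_normr (z : C) : (normc z)%:C = `|z|.
Proof. by case: z => a b; rewrite normc_def. Qed.

Lemma cvnorm_ge0 n (x : 'cV[C]_n) : 0 <= cvnorm x.
Proof. exact: sqrtr_ge0. Qed.

Lemma cvnorm_sqr n (x : 'cV[C]_n) : (cvnorm x ^+ 2)%:C = sqnorm x.
Proof.
rewrite sqr_sqrtr; last by apply: sumr_ge0 => k _; apply: sqr_ge0.
rewrite rmorph_sum sqnorm_sum; apply: eq_bigr => k _.
by rewrite rmorphXn /= normc_normr.
Qed.

Lemma cvnorm_eq0 n (x : 'cV[C]_n) : (cvnorm x == 0) = (x == 0).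
Proof. by rewrite -sqnorm_eq0 -cvnorm_sqr (inj_eq (@complexI R)) sqrf_eq0. Qed.

Lemma cvnormZ n (a : R) (x : 'cV[C]_n) : 0 <= a ->
  cvnorm (a%:C *: x) = a * cvnorm x.
Proof.
move=> a0; apply/eqP; rewrite -(@eqrXn2 _ 2) ?mulr_ge0 ?cvnorm_ge0 //.
rewrite -(inj_eq (@complexI R)) exprMn [X in _ == X]rmorphM /= !cvnorm_sqr !sqnorm_sum.
rewrite mulr_sumr; apply/eqP/eq_bigr => k _.
by rewrite mxE normrM exprMn rmorphXn /= ger0_norm ?ler0c.
Qed.

Lemma sqnorm_le_cvnorm n m (x : 'cV[C]_n) (y : 'cV[C]_m) (a : R) :
  cvnorm x <= a * cvnorm y -> sqnorm x <= (a ^+ 2)%:C * sqnorm y.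
Proof.
move=> hxy; have ay0 := le_trans (cvnorm_ge0 x) hxy. rewrite -!cvnorm_sqr -rmorphM /= lecR -exprMn.
by rewrite ler_sqr ?nnegrE ?cvnorm_ge0.
Qed.

Lemma spnorm_has_sup n (B : 'M[C]_n) (u : 'cV[C]_n) : cvnorm u = 1 ->
  has_sup [set cvnorm (B *m x) | x in [set x : 'cV[C]_n | cvnorm x = 1]].
Proof.
move=> u1; split; first by exists (cvnorm (B *m u)); exists u.
pose frob := \sum_i \sum_j normc (B i j) ^+ 2.
have frob0 : 0 <= frob by apply: sumr_ge0 => i _; apply: sumr_ge0 => j _; apply: sqr_ge0.
have frobE : frob%:C = \sum_i \sum_j `|B i j| ^+ 2.
  rewrite rmorph_sum; apply: eq_bigr => i _; rewrite rmorph_sum.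
  by apply: eq_bigr => j _; rewrite rmorphXn /= normc_normr.
exists (Num.sqrt frob) => _ [x /= x1 <-].
rewrite -ler_sqr ?nnegrE ?cvnorm_ge0 ?sqrtr_ge0 // (sqr_sqrtr frob0) -lecR cvnorm_sqr.
apply: le_trans (sqnorm_mulmx_le_frobenius B x) _.
by rewrite -cvnorm_sqr x1 expr1n mulr1 frobE.
Qed.

Lemma spnorm_ub n (B : 'M[C]_n) (x : 'cV[C]_n) :
  cvnorm (B *m x) <= spnorm B * cvnorm x.
Proof.
have [->|x0] := eqVneq x 0.
  have /eqP cvnorm0 : cvnorm (0 : 'cV[C]_n) == 0 by rewrite cvnorm_eq0.
  by rewrite mulmx0 cvnorm0 mulr0.
have xp : 0 < cvnorm x by rewrite lt_def cvnorm_eq0 x0 cvnorm_ge0.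
have xi0 : 0 <= (cvnorm x)^-1 by rewrite invr_ge0 ltW.
pose u := (cvnorm x)^-1%:C *: x.
have u1 : cvnorm u = 1 by rewrite cvnormZ // mulVf ?gt_eqF.
have : cvnorm (B *m u) <= spnorm B by apply: (sup_upper_bound (spnorm_has_sup B u1)); exists u.
rewrite -scalemxAr cvnormZ // => h.
by rewrite -ler_pdivrMr // mulrC.
Qed.

Lemma sqnorm_mulmx_le_spnorm n (B : 'M[C]_n) (x : 'cV[C]_n) :
  sqnorm (B *m x) <= (spnorm B ^+ 2)%:C * sqnorm x.
Proof. exact: sqnorm_le_cvnorm (spnorm_ub B x). Qed.
End SpectralNorm.

Lemma cplx_adjmx (R : realType) m n (A : 'M[R]_(m, n)) :
  (map_mx (real_complex R) A)^t* = map_mx (real_complex R) A^T.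
Proof.
by apply/matrixP => i j; rewrite !mxE conj_Creal //; apply/complex_realP; exists (A j i).
Qed.

Lemma add_conjc (R : realType) (z : R[i]) : z + z^* = ((complex.Re z *+ 2)%:C)%C.
Proof. by rewrite rmorphMn /= complexRe ReE -mulr_natr divfK // pnatr_eq0. Qed.

Lemma mulmx_tr_row_gt0 (R : realDomainType) n (v : 'rV[R]_n) :
  v != 0 -> 0 < (v *m v^T) 0 0.
Proof.
move=> v0; have -> : (v *m v^T) 0 0 = \sum_i v 0 i ^+ 2.
  by rewrite mxE; apply: eq_bigr => i _; rewrite !mxE expr2.
rewrite lt_def sumr_ge0 ?andbT => [|i _]; last exact: sqr_ge0.
apply: contra v0 => /eqP /psumr_eq0P h; apply/eqP/rowP => i; rewrite mxE.
by apply/eqP; rewrite -sqrf_eq0 h // => j _; apply: sqr_ge0.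
Qed.

Lemma posdefmx_unit (R : realType) d (A : 'M[R]_d) : posdefmx A -> A \in unitmx.
Proof.
move=> hA; rewrite unitmxE unitfE; apply/negP => /det0P [v v0 vA].
have := hA v^T; rewrite trmx_eq0 => /(_ v0).
by rewrite trmxK vA mul0mx mxE ltxx.
Qed.

Section LyapunovSpectrum.
Variables (R : realType) (d : nat) (D Cm K S : 'M[R]_d) (lam mu : R).
Hypothesis hC : pos_stable Cm.
Hypothesis hK : spdmx K.
Hypothesis hL : 2%:R *: D = Cm *m K + K *m Cm^T.
Hypothesis hS : is_sqrtmx D S.
Hypothesis hlam : is_min_eig (S *m invmx K *m S) lam.
Hypothesis hmu : is_min_re_spec Cm mu.

Local Notation C := R[i].
Local Notation f := (real_complex R).
Local Notation Si := (invmx S).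
Local Notation M := (S *m invmx K *m S).
Local Notation N := (Si *m K *m Si).
Local Notation T := (Si *m Cm *m S).
Local Notation Mc := (map_mx f M).
Local Notation Nc := (map_mx f N).
Local Notation Tc := (map_mx f T).

Let Sunit : S \in unitmx. Proof. exact: posdefmx_unit hS.1.2. Qed.
Let Kunit : K \in unitmx. Proof. exact: posdefmx_unit hK.2. Qed.
Let ST : S^T = S. Proof. exact: hS.1.1. Qed.

Lemma MN1 : M *m N = 1%:M.
Proof. by rewrite !mulmxA mulmxK // mulmxKV // mulmxV. Qed.

Lemma NT : N^T = N.
Proof. by rewrite !trmx_mul trmx_inv ST hK.1 mulmxA. Qed.

Lemma MT : M^T = M.
Proof. by rewrite !trmx_mul trmx_inv ST hK.1 mulmxA. Qed.

Lemma lyapunov_T : T *m N + N *m T^T = 2%:R%:M.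
Proof.
have -> : T *m N = Si *m (Cm *m K) *m Si by rewrite !mulmxA mulmxK.
have -> : N *m T^T = Si *m (K *m Cm^T) *m Si.
  by rewrite !trmx_mul trmx_inv ST !mulmxA mulmxKV.
rewrite -mulmxDl -mulmxDr -hL -hS.2 -scalemxAr -scalemxAl !mulmxA.
by rewrite mulVmx // mul1mx mulmxV // scalemx1.
Qed.

Lemma lam_gt0 : 0 < lam.
Proof.
have /eigenvalueP [x hx x0] := hlam.1.
set w := x *m S *m invmx K.
have w0 : w != 0.
  apply: contraNneq x0 => w0.
  by rewrite -(mulmxK Sunit x) -(mulmxKV Kunit (x *m S)) -/w w0 !mul0mx.
have := hK.2 w^T; rewrite trmx_eq0 => /(_ w0).
have -> : w^T^T *m K *m w^T = x *m M *m x^T.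
  by rewrite trmxK /w mulmxKV // !trmx_mul trmx_inv ST hK.1 !mulmxA.
by rewrite hx -scalemxAl mxE pmulr_lgt0 // mulmx_tr_row_gt0.
Qed.

Lemma mu_gt0 : 0 < mu.
Proof. by have [[l hl <-] _] := hmu; apply: hC. Qed.

Lemma spectrum_similar (l : C) : l \in spectrum Cm <-> eigenvalue Tc l.
Proof.
by rewrite in_setE /= !map_mxM map_invmx eigenvalue_similar ?map_unitmx.
Qed.

Lemma add_conj_spectrum_ge (l : C) : l \in spectrum Cm -> ((mu *+ 2)%:C)%C <= l + l^*.
Proof. by move=> hl; rewrite add_conjc lecR lerMn2r hmu.2. Qed.

Lemma Nc_hermitian : Nc^t* = Nc.
Proof. by rewrite cplx_adjmx NT. Qed.

Lemma lyapunov_Tc : Tc *m Nc + Nc *m Tc^t* = 2%:R%:M.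
Proof.
by rewrite cplx_adjmx -!map_mxM -map_mxD lyapunov_T map_scalar_mx rmorph_nat.
Qed.

Lemma hform_Nc_le (y : 'cV[C]_d) : hform Nc y <= ((lam^-1)%:C)%C * sqnorm y.
Proof.
apply: hermitian_form_le Nc_hermitian _ y => z e z0 hz.
have eR := hermitian_eigen_real Nc_hermitian z0 hz.
have MNc : Mc *m Nc = 1%:M by rewrite -map_mxM MN1 map_mx1.
have [e0 hMz] := eigenvector_inv MNc z0 hz.
have /complex_realP [r er] : e^-1 \is Num.real by rewrite CrealE fmorphV /= eR.
have hr : eigenvalue M r.
  rewrite -(eigenvalue_map f); apply: (eigenvalue_sym _ z0).
    by rewrite map_trmx MT.
  by rewrite hMz er.
have lr := hlam.2 r hr; have r0 := lt_le_trans lam_gt0 lr.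
by rewrite -[e]invrK er -fmorphV lecR lef_pV2 ?posrE ?lam_gt0.
Qed.

Lemma lamK_le_mu : lam <= mu.
Proof.
have [[l hl hRe] _] := hmu.
have /spectrum_similar/eigenvalueP [u hu u0] := hl.
(* [eigenvalue] refers to row eigenvectors, so [u^t*] is an eigenvector of [Tc^t*]. *)
set y := u^t*.
have hy : Tc^t* *m y = l^* *: y by rewrite -adjmxM hu linearZ /= map_mxZ.
have yp : 0 < sqnorm y by rewrite sqnorm_gt0 adjmx_eq0.
have hq : sqnorm y = mu%:C%C * hform Nc y.
  have two0 : 2%:R != 0 :> C by rewrite pnatr_eq0.
  apply: (mulfI two0).
  rewrite (lyapunov_adj_eigen lyapunov_Tc hy) conjCK addrC add_conjc hRe.
  by rewrite rmorphMn mulrnAl -mulr_natl.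
have : (1%:C * sqnorm y <= (mu / lam)%:C * sqnorm y)%C.
  rewrite rmorph1 mul1r {1}hq (rmorphM _ mu) -mulrA /=.
  by apply: ler_wpM2l; [rewrite ler0c ltW ?mu_gt0|apply: hform_Nc_le].
by rewrite ler_pM2r // lecR ler_pdivlMr ?lam_gt0 // mul1r.
Qed.

Lemma Nc_eigenvector : exists2 y : 'cV[C]_d, y != 0 & Nc *m y = (lam^-1)%:C%C *: y.
Proof.
have /eigenvalueP [x hx x0] := hlam.1.
have Mx : M *m x^T = lam *: x^T by rewrite -{1}MT -trmx_mul hx linearZ.
have xT0 : x^T != 0 by rewrite trmx_eq0.
have [_ Nx] := eigenvector_inv (mulmx1C MN1) xT0 Mx.
by exists (map_mx f x^T); rewrite ?map_mx_eq0 // -map_mxM Nx map_mxZ.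
Qed.

Lemma mu_le_condnum_lamK (A Lam : 'M[C]_d) : is_diag_mx Lam -> A \in unitmx ->
  cplxmx T = A *m Lam *m invmx A -> mu <= condnum A ^+ 2 * lam.
Proof.
move=> /diag_mxP [s ->] Au hT0.
have hT : Tc = A *m diag_mx s *m invmx A := hT0.
have mup : 0 < mu%:C%C :> C by rewrite ltcR mu_gt0.
have sk k : mu%:C%C *+ 2 <= s 0 k + (s 0 k)^*.
  rewrite -rmorphMn; apply/add_conj_spectrum_ge/spectrum_similar.
  exact: eigenvalue_diag_similar Au hT.
have AiT : invmx A *m Tc = diag_mx s *m invmx A by rewrite hT mulKmx_similar.
have hB : (invmx A *m Nc *m (invmx A)^t*)^t* = invmx A *m Nc *m (invmx A)^t*.
  by rewrite !adjmxM trmxCK Nc_hermitian mulmxA.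
have B_le := lyapunov_diag_form_le hB mup sk
  (sqnorm_adjmx_le (sqnorm_mulmx_le_spnorm (invmx A)))
  (lyapunov_conj lyapunov_Tc AiT).
have [y y0 Ny] := Nc_eigenvector.
have yp : 0 < sqnorm y by rewrite sqnorm_gt0.
have : ((lam^-1)%:C * sqnorm y <=
         (spnorm (invmx A) ^+ 2 / mu * spnorm A ^+ 2)%:C * sqnorm y)%C.
  rewrite -(hform_eigen Ny) -(conj_invmx_adj Nc Au).
  rewrite (rmorphM _ (_ / mu)) (rmorphM _ (_ ^+ 2)) fmorphV /=.
  apply: hform_conj_le B_le (sqnorm_adjmx_le (sqnorm_mulmx_le_spnorm A)) _.
  by rewrite divr_ge0 ?(ltW mup) // ler0c sqr_ge0.
rewrite ler_pM2r // lecR => key.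
rewrite /condnum; move: (spnorm A) (spnorm (invmx A)) key => p q key.
rewrite exprMn -(ler_pdivrMr _ _ lam_gt0).
apply: le_trans (ler_wpM2l (ltW mu_gt0) key) _.
by rewrite mulrCA mulrA divfK ?gt_eqF ?mu_gt0 // [X in _ <= X]mulrC.
Qed.
End LyapunovSpectrum.

Theorem proposition8p1 (R : realType) (d : nat) (hd : (0 < d)%N)
  (D C K sqD : 'M[R]_d) (lamK mu : R) :
  spdmx D -> pos_stable C ->
  spdmx K -> 2%:R *: D = C *m K + K *m C^T ->
  is_sqrtmx D sqD ->
  is_min_eig (sqD *m invmx K *m sqD) lamK ->
  is_min_re_spec C mu ->
  lamK <= mu /\
  (forall (At Lam : 'M[R[i]]_d),
     is_diag_mx Lam -> At \in unitmx ->
     cplxmx (invmx sqD *m C *m sqD) = At *m Lam *m invmx At ->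
     mu <= condnum At ^+ 2 * lamK).
Proof.
move=> _ hC hK hL hS hlam hmu; split; first exact: lamK_le_mu hC hK hL hS hlam hmu.
move=> At Lam hLam hAt hT.
exact: (mu_le_condnum_lamK hC hK hL hS hlam hmu hLam hAt hT).
Qed.
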